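(* Consider a robotic system with configuration $\xi\in\mathbb{R}^N$ ($N\ge 2$) obeying the rigid-body dynamics $$\mathcal{M}(\xi)\ddot\xi+\mathcal{C}(\xi,\dot\xi)\dot\xi+g(\xi)=\tau_c+\tau_e,$$ controlled by the damping controller $$\tau_c=g(\xi)+\mathcal{D}(\xi,\dot\xi)\bigl(f(\xi)-\dot\xi\bigr),$$ where the damping matrix $\mathcal{D}(\xi,\dot\xi)$ is the obstacle-aware damping matrix described in the context, and suppose that all damping values (all diagonal entries of the diagonal factors $\mathcal{S}$ in the decompositions $\mathcal{Q}\mathcal{S}\mathcal{Q}^{-1}$ of the damping matrices) are equal to $1$. Let $W(\xi,\dot\xi)=\tfrac12\dot\xi^T\mathcal{M}(\xi)\dot\xi$ be the kinetic energy. Then the closed-loop system is passive with respect to the input–output pair $(\tau_e,\dot\xi)$, with storage function $W$, whenever the velocity is at least as large as the desired velocity, i.e. $$\dot W\le \dot\xi^T\tau_e\qquad\text{for all }\xi\in\mathbb{R}^N\text{ with }\|\dot\xi\|\ge\|f(\xi)\|.$$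
   Context: $\mathcal{M}(\xi)\in\mathbb{R}^{N\times N}$ is the (symmetric positive definite) mass matrix, $\mathcal{C}$ the Coriolis matrix, $g$ the gravity vector, $\tau_c$ the control force and $\tau_e$ the external disturbance force; as for any physical system, $\dot{\mathcal{M}}-2\mathcal{C}$ is skew-symmetric. $f:\mathbb{R}^N\to\mathbb{R}^N$ is a continuous desired velocity field. Obstacles $o=1,\dots,N^{o}$ are described by distance functions $\Gamma_o(\xi)$ with $\Gamma_o>1$ outside, $=1$ on the boundary of the obstacle, and unit surface normals $n_o(\xi)$ pointing away from the obstacle; $\Gamma(\xi)=\min_o\Gamma_o(\xi)$. Averaged normal: $n(\xi)=\sum_{o}n_o(\xi)\,\frac{1/(\Gamma_o(\xi)-1)}{\sum_{p}1/(\Gamma_p(\xi)-1)}$. Danger weight: $w(\xi)=\max\!\bigl(0,\frac{\Gamma^{crit}-\Gamma(\xi)}{\Gamma^{crit}-1}\bigr)\|n(\xi)\|$ with a constant $\Gamma^{crit}>1$. The damping matrix is $\mathcal{D}(\xi,\dot\xi)=(1-w(\xi))\mathcal{D}^f(\xi)+w(\xi)\mathcal{D}^{o}(\xi,\dot\xi)$, where $\mathcal{D}^f=\mathcal{Q}^f\mathcal{S}^f(\mathcal{Q}^f)^{-1}$ with $\mathcal{Q}^f$ an orthonormal basis whose first column is $q_1^f=f/\|f\|$ and $\mathcal{S}^f$ diagonal with positive entries, and $\mathcal{D}^o=\mathcal{Q}^o\mathcal{S}^o(\mathcal{Q}^o)^{-1}$ with $\mathcal{Q}^o$ an orthonormal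 basis whose first column is $n/\|n\|$, second column the normalization of $q_1^f-p\,n/\|n\|$ with $p=\langle n/\|n\|,q_1^f\rangle$ (any orthonormal vector if $|p|=1$), and $\mathcal{S}^o$ diagonal with positive entries. In this lemma all diagonal entries of $\mathcal{S}^f$ and $\mathcal{S}^o$ equal $1$. *)

From HB Require Import structures.
From mathcomp Require Import all_boot all_order all_algebra.
From mathcomp Require Import all_classical all_reals all_analysis.
Set Implicit Arguments. Unset Strict Implicit. Unset Printing Implicit Defensive.
Import Order.TTheory GRing.Theory Num.Theory.
Import numFieldNormedType.Exports.
Local Open Scope ring_scope.

Section Damping.
Variables (R : realType) (n : nat).
Local Notation N := n.+2.
Local Notation vec := 'cV[R]_N.
Local Notation mat := 'M[R]_N.

Definition dotv (u v : vec) : R := (u^T *m v) 0 0.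
Definition vnorm (v : vec) : R := Num.sqrt (dotv v v).

Definition orthonormal (Q : mat) : Prop := Q^T *m Q = 1%:M.

(* the obstacles o = 1..No+1 (at least one obstacle) *)
Variables (No : nat) (Gam : 'I_No.+1 -> vec -> R) (nrm : 'I_No.+1 -> vec -> vec)
          (Gcrit : R).

Definition Gamma (x : vec) : R := \big[Num.min/Gam ord0 x]_(o < No.+1) Gam o x.

Definition navg (x : vec) : vec :=
  \sum_(o < No.+1)
     (((Gam o x - 1)^-1 / \sum_(p < No.+1) (Gam p x - 1)^-1) *: nrm o x).

Definition wdanger (x : vec) : R :=
  Num.max 0 ((Gcrit - Gamma x) / (Gcrit - 1)) * vnorm (navg x).

(* first column of Q^f : f / ||f|| *)
Definition q1f (f : vec -> vec) (x : vec) : vec := (vnorm (f x))^-1 *: f x.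

Definition Qf_valid (f : vec -> vec) (x : vec) (Q : mat) : Prop :=
  orthonormal Q /\ (f x != 0 -> col 0 Q = q1f f x).

Definition Qo_valid (f : vec -> vec) (x : vec) (Q : mat) : Prop :=
  orthonormal Q /\
  (navg x != 0 ->
     let nh := (vnorm (navg x))^-1 *: navg x in
     col 0 Q = nh /\
     (f x != 0 ->
        let p := dotv nh (q1f f x) in
        `|p| != 1 ->
        col (inord 1) Q = (vnorm (q1f f x - p *: nh))^-1 *: (q1f f x - p *: nh))).

Definition Dmat (x : vec) (Qf Qo : mat) (sf so : 'rV[R]_N) : mat :=
  (1 - wdanger x) *: (Qf *m diag_mx sf *m invmx Qf)
  + wdanger x *: (Qo *m diag_mx so *m invmx Qo).

End Damping.

(** With all damping values equal to 1 both damping matrices are Q Q^-1 = I, so the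
    damping matrix is the identity whatever the danger weight is.  Along a
    closed-loop trajectory the power balance then reads
      dW/dt = <dxi, f - dxi> + <dxi, tau_e> + 1/2 <dxi, (dM - 2C) dxi>,
    the last term vanishes by skew-symmetry, and <dxi, f - dxi> <= 0 as soon as
    |f| <= |dxi|, because 2 <dxi, f> <= |dxi|^2 + |f|^2 <= 2 |dxi|^2. *)
From Pilot Require Import Defs.
From HB Require Import structures.
From mathcomp Require Import all_boot all_order all_algebra.
From mathcomp Require Import all_classical all_reals all_analysis.
From mathcomp Require Import lra.
Set Implicit Arguments. Unset Strict Implicit. Unset Printing Implicit Defensive.
Import Order.TTheory GRing.Theory Num.Theory.
Import numFieldNormedType.Exports.
Local Open Scope ring_scope.

Section MatrixDerive.
Context {R : realFieldType} {V : normedModType R}.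

Lemma is_derive_mxP m n (F : V -> 'M[R]_(m, n)) x v (dF : 'M[R]_(m, n)) :
  is_derive x v F dF <-> forall i j, is_derive x v (fun y => F y i j) (dF i j).
Proof.
split=> [[dF_ex dF_val] i j | dFij].
  apply: DeriveDef; first by move/derivable_mxP: dF_ex; apply.
  by rewrite -dF_val (derive_mx dF_ex) mxE.
have dF_ex : derivable F x v by apply/derivable_mxP => i j; case: (dFij i j).
apply: DeriveDef => //; apply/matrixP => i j.
by rewrite (derive_mx dF_ex) mxE; case: (dFij i j).
Qed.

Lemma is_derive_mulmx m n p (F : V -> 'M[R]_(m, n)) (G : V -> 'M[R]_(n, p))
    x v (dF : 'M[R]_(m, n)) (dG : 'M[R]_(n, p)) :
  is_derive x v F dF -> is_derive x v G dG ->
  is_derive x v (fun y => F y *m G y) (dF *m G x + F x *m dG).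
Proof.
move=> /is_derive_mxP dFij /is_derive_mxP dGij; apply/is_derive_mxP => i j.
have -> : (fun y => (F y *m G y) i j)
          = \sum_(k < n) ((fun y => F y i k) * (fun y => G y k j)).
  by apply/funext => y; rewrite !mxE fct_sumE.
rewrite !mxE -big_split /=.
apply: is_derive_eq (is_derive_sum (fun k => is_deriveM (dFij i k) (dGij k j))) _.
by apply: eq_bigr => k _; rewrite addrC [G x k j *: _]mulrC.
Qed.

Lemma is_derive_trmx m n (F : V -> 'M[R]_(m, n)) x v (dF : 'M[R]_(m, n)) :
  is_derive x v F dF -> is_derive x v (fun y => (F y)^T) dF^T.
Proof.
move=> /is_derive_mxP dFij; apply/is_derive_mxP => i j; rewrite mxE.
by under eq_fun do rewrite mxE.
Qed.

End MatrixDerive.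

Section InnerProduct.
Context {R : realType} {n : nat}.
Local Notation vec := 'cV[R]_n.+2.
Local Notation mat := 'M[R]_n.+2.
Implicit Types (u v w : vec) (A : mat).

Lemma dotvC u v : dotv u v = dotv v u.
Proof. by rewrite /dotv -{1}[u^T *m v]trmxK trmx_mul trmxK mxE. Qed.

Lemma dotvDr u v w : dotv u (v + w) = dotv u v + dotv u w.
Proof. by rewrite /dotv mulmxDr mxE. Qed.

Lemma dotvNr u v : dotv u (- v) = - dotv u v.
Proof. by rewrite /dotv mulmxN mxE. Qed.

Lemma dotvBr u v w : dotv u (v - w) = dotv u v - dotv u w.
Proof. by rewrite dotvDr dotvNr. Qed.

Lemma dotvBl u v w : dotv (v - w) u = dotv v u - dotv w u.
Proof. by rewrite dotvC dotvBr !(dotvC u). Qed.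

Lemma dotvZr (c : R) u v : dotv u (c *: v) = c * dotv u v.
Proof. by rewrite /dotv -scalemxAr mxE. Qed.

Lemma dotvv_ge0 u : 0 <= dotv u u.
Proof.
by rewrite /dotv mxE; apply: sumr_ge0 => i _; rewrite mxE -expr2 sqr_ge0.
Qed.

Lemma dotv_trmx u A v : dotv u (A *m v) = dotv (A^T *m u) v.
Proof. by rewrite /dotv trmx_mul trmxK mulmxA. Qed.

Lemma dotv_sym_mx u A v : A^T = A -> dotv u (A *m v) = dotv v (A *m u).
Proof. by move=> symA; rewrite dotv_trmx symA dotvC. Qed.

Lemma dotv_skew_mx v A : A^T = - A -> dotv v (A *m v) = 0.
Proof.
move=> skewA; apply/eqP; rewrite -[_ == 0](mulrn_eq0 _ 2) mulr2n.
by rewrite {2}dotv_trmx skewA mulNmx [dotv (- _) _]dotvC dotvNr subrr.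
Qed.

Lemma dotv_le_dotvv u v : vnorm v <= vnorm u -> dotv u v <= dotv u u.
Proof.
rewrite /vnorm ler_sqrt ?dotvv_ge0// => vv_le_uu.
have := dotvv_ge0 (u - v).
rewrite dotvBl !dotvBr (dotvC v u); lra.
Qed.

Lemma is_derive_dotv {V : normedModType R} (a b : V -> vec) x e (da db : vec) :
  is_derive x e a da -> is_derive x e b db ->
  is_derive x e (fun y => dotv (a y) (b y)) (dotv da (b x) + dotv (a x) db).
Proof.
move=> a' b'; have := is_derive_mulmx (is_derive_trmx a') b'.
by move=> /is_derive_mxP /(_ 0 0); rewrite mxE.
Qed.

Lemma is_derive_half_quadform {V : normedModType R} (a : V -> vec) (A : V -> mat)
    x e (da : vec) (dA : mat) :
  (A x)^T = A x -> is_derive x e a da -> is_derive x e A dA ->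
  is_derive x e (fun y => 2^-1 * dotv (a y) (A y *m a y))
    (dotv (a x) (A x *m da) + 2^-1 * dotv (a x) (dA *m a x)).
Proof.
move=> symAx a' A'.
have -> : (fun y => 2^-1 * dotv (a y) (A y *m a y))
          = 2^-1 \*: (fun y => dotv (a y) (A y *m a y)) by [].
apply: is_derive_eq (is_deriveZ _ (is_derive_dotv a' (is_derive_mulmx A' a'))) _.
have swap_da : dotv da (A x *m a x) = dotv (a x) (A x *m da).
  by rewrite [RHS]dotv_sym_mx // dotvC.
rewrite swap_da dotvDr [_ *: _]mulrDr; lra.
Qed.

Lemma power_balance (a b f tau : vec) (M dM C : mat) :
  (dM - 2%:R *: C)^T = - (dM - 2%:R *: C) ->
  M *m b + C *m a = (f - a) + tau ->
  dotv a (M *m b) + 2^-1 * dotv a (dM *m a) = dotv a (f - a) + dotv a tau.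
Proof.
move=> skew eom.
have skew0 := dotv_skew_mx a skew.
rewrite mulmxBl dotvBr -scalemxAl dotvZr in skew0.
have -> : M *m b = (f - a) + tau - C *m a by rewrite -eom addrK.
rewrite !(dotvDr, dotvNr); lra.
Qed.

End InnerProduct.

Section UnitDamping.
Context {R : realType} {n No : nat} (Gam : 'I_No.+1 -> 'cV[R]_n.+2 -> R)
  (nrm : 'I_No.+1 -> 'cV[R]_n.+2 -> 'cV[R]_n.+2) (Gcrit : R).

(* [Defs.] is needed: the imported classfun library also defines [orthonormal]. *)
Lemma orthonormal_unitmx (Q : 'M[R]_n.+2) : Defs.orthonormal Q -> Q \in unitmx.
Proof. by case/mulmx1_unit. Qed.

Lemma Dmat_unit_damping x (Qf Qo : 'M[R]_n.+2) :
  Defs.orthonormal Qf -> Defs.orthonormal Qo ->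
  Dmat Gam nrm Gcrit x Qf Qo (const_mx 1) (const_mx 1) = 1%:M.
Proof.
move=> /orthonormal_unitmx Qf_unit /orthonormal_unitmx Qo_unit.
by rewrite /Dmat diag_const_mx !mulmx1 !mulmxV // -scalerDl subrK scale1r.
Qed.

End UnitDamping.

Theorem lemma3p1 (R : realType) (n : nat)
  (M : 'cV[R]_n.+2 -> 'M[R]_n.+2)
  (C : 'cV[R]_n.+2 -> 'cV[R]_n.+2 -> 'M[R]_n.+2)
  (g f : 'cV[R]_n.+2 -> 'cV[R]_n.+2)
  (No : nat) (Gam : 'I_No.+1 -> 'cV[R]_n.+2 -> R)
  (nrm : 'I_No.+1 -> 'cV[R]_n.+2 -> 'cV[R]_n.+2) (Gcrit : R)
  (Qf : 'cV[R]_n.+2 -> 'M[R]_n.+2)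
  (Qo : 'cV[R]_n.+2 -> 'cV[R]_n.+2 -> 'M[R]_n.+2)
  (xi dxi ddxi tau_e : R -> 'cV[R]_n.+2) (dM : R -> 'M[R]_n.+2) :
  (* mass matrix symmetric positive definite *)
  (forall x, (M x)^T = M x) ->
  (forall x v, v != 0 -> 0 < dotv v (M x *m v)) ->
  (* obstacle data *)
  (forall o x, vnorm (nrm o x) = 1) ->
  1 < Gcrit ->
  (* admissible bases for the damping matrices *)
  (forall x, Qf_valid f x (Qf x)) ->
  (forall x v, Qo_valid Gam nrm f x (Qo x v)) ->
  (* trajectory: velocity, acceleration, time derivative of M(xi(t)) *)
  (forall t : R, is_derive t (1:R) xi (dxi t)) ->
  (forall t : R, is_derive t (1:R) dxi (ddxi t)) ->
  (forall t : R, is_derive t (1:R) (M \o xi) (dM t)) ->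
  (* dM/dt - 2 C is skew-symmetric *)
  (forall t, (dM t - 2%:R *: C (xi t) (dxi t))^T
             = - (dM t - 2%:R *: C (xi t) (dxi t))) ->
  (* closed-loop dynamics with the damping controller, all damping values = 1 *)
  (forall t,
     M (xi t) *m ddxi t + C (xi t) (dxi t) *m dxi t + g (xi t)
     = (g (xi t) + Dmat Gam nrm Gcrit (xi t) (Qf (xi t)) (Qo (xi t) (dxi t))
                        (const_mx 1) (const_mx 1) *m (f (xi t) - dxi t))
       + tau_e t) ->
  let W := fun t => 2%:R^-1 * dotv (dxi t) (M (xi t) *m dxi t) in
  forall t, vnorm (f (xi t)) <= vnorm (dxi t) ->
    derivable W t (1:R) /\ derive1 W t <= dotv (dxi t) (tau_e t).
Proof.
move=> M_sym _ _ _ Qf_ok Qo_ok xi' dxi' Mxi' skew dyn W t f_le.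
have W' : is_derive t 1 W (dotv (dxi t) (M (xi t) *m ddxi t)
                           + 2^-1 * dotv (dxi t) (dM t *m dxi t)).
  exact: is_derive_half_quadform (M_sym (xi t)) (dxi' t) (Mxi' t).
have eom : M (xi t) *m ddxi t + C (xi t) (dxi t) *m dxi t
           = (f (xi t) - dxi t) + tau_e t.
  apply: (addIr (g (xi t))); rewrite dyn Dmat_unit_damping ?mul1mx.
  - by rewrite [g _ + _]addrC addrAC.
  - by case: (Qf_ok (xi t)).
  - by case: (Qo_ok (xi t) (dxi t)).
split; first exact: ex_derive.
rewrite derive1E derive_val (power_balance (skew t) eom).
by rewrite gerDr dotvBr subr_le0; exact: dotv_le_dotvv f_le.
Qed.
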